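(* With the natural actions of the symmetric groups, the maps $\phi^0$ and $\phi^1$ are injective morphisms of symmetric set-operads from $\mathcal{FF}^\Sigma$ to the symmetric set-operads underlying $\mathrm{Mould}_0^\Sigma$ and $\mathrm{Mould}_1^\Sigma$, respectively.
   Context: $\mathcal{FF}(n)$ is the set of reduced formal fractions whose numerator and denominator are products of symbols $[S]$, $\emptyset\ne S\subseteq\{1,\dots,n\}$, i.e. the free abelian group written multiplicatively on these symbols. For $F\in\mathcal{FF}(m)$, $G\in\mathcal{FF}(n)$: $F\circ_i G=[S_{i,n}]\,F(1,\dots,i-1,S_{i,n},i+n,\dots,m+n-1)\,G(i,\dots,i+n-1)$, where $S_{i,n}=\{i,\dots,i+n-1\}$ and $F(A_1,\dots,A_m)$ replaces each $[S]$ by $[\bigcup_{k\in S}A_k]$. $\mathcal{FF}^\Sigma$ is $\mathcal{FF}$ with $\sigma\in S_n$ acting by $[S]\mapsto[\sigma(S)]$. $\mathrm{Mould}_0(n)=\mathrm{Mould}_1(n)=\mathbb{Q}(u_1,\dots,u_n)$ with compositions $F\circ_iG=\Sigma_{i,n}F(u_1,\dots,u_{i-1},\Sigma_{i,n},u_{i+n},\dots,u_{m+n-1})G(u_i,\dots,u_{i+n-1})$, $\Sigma_{i,n}=u_i+\dots+u_{i+n-1}$ (for $\mathrm{Mould}_0$), and $F\circ_iG=(\Pi_{i,n}-1)F(u_1,\dots,u_{i-1},\Pi_{i,n},u_{i+n},\dots,u_{m+n-1})G(u_i,\dots,u_{i+n-1})$, $\Pi_{i,n}=u_i\cdots u_{i+n-1}$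 (for $\mathrm{Mould}_1$); $S_n$ acts by permuting the variables $u_1,\dots,u_n$; the superscript $\Sigma$ denotes these symmetric operads. $\phi^0([S])=\sum_{j\in S}u_j$ and $\phi^1([S])=\prod_{j\in S}u_j-1$, extended multiplicatively. *)

From HB Require Import structures.
From mathcomp Require Import all_boot all_order all_algebra all_fingroup.
Set Implicit Arguments. Unset Strict Implicit. Unset Printing Implicit Defensive.
Import Order.TTheory GRing.Theory Num.Theory.
Local Open Scope ring_scope.

(* Indices are 0-based: {1,...,n} is rendered as 'I_n.                     *)
Definition nesub (n : nat) := {S : {set 'I_n} | S != set0}.

(* FF(n) = free abelian group on the symbols [S]; an element is recorded by
   its (finitely supported) exponent vector, written additively.           *)
Definition FF (n : nat) := {ffun nesub n -> int}.

Definition FFgen (n : nat) (S : {set 'I_n}) : FF n :=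
  [ffun T : nesub n => ((val T == S) : nat)%:Z].

Definition FFmap (p q : nat) (f : {set 'I_p} -> {set 'I_q}) (F : FF p) : FF q :=
  [ffun T : nesub q => \sum_(S : nesub p | f (val S) == val T) F S].

(* Composition block data, for arities m.+1 and n.+1, position i : 'I_m.+1
   (0-based).  blk i k is the set A_k of the paper: {k} for k < i,
   S_{i,n.+1} = {i,...,i+n} for k = i, and {k+n} for k > i.               *)
Definition blk (m n : nat) (i k : 'I_m.+1) : {set 'I_(m + n).+1} :=
  [set j : 'I_(m + n).+1 |
     if (k < i)%N then (j == k :> nat)
     else if k == i then (i <= j <= i + n)%N
     else (j == (k + n)%N :> nat)].

Definition shft (m n : nat) (i : 'I_m.+1) (j : 'I_n.+1) : 'I_(m + n).+1 :=
  inord (i + j)%N.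

Definition FFcomp (m n : nat) (i : 'I_m.+1) (F : FF m.+1) (G : FF n.+1)
  : FF (m + n).+1 :=
  FFgen (blk n i i)
  + FFmap (fun S => \bigcup_(k in S) blk n i k) F
  + FFmap (fun S => [set shft i j | j in S]) G.

Definition FFact (n : nat) (s : {perm 'I_n}) (F : FF n) : FF n :=
  FFmap (fun S => s @: S) F.

Definition FFunit : FF 1 := - FFgen [set ord0].

(* Q[u_1,...,u_n] as iterated univariate polynomials:
   mpoly n.+1 = (mpoly n)[u_{n+1}]                                         *)
Fixpoint mpoly (n : nat) : idomainType :=
  match n with
  | 0 => rat
  | k.+1 => {poly mpoly k}
  end.

Fixpoint mX (n : nat) : 'I_n -> mpoly n :=
  match n return 'I_n -> mpoly n with
  | 0 => fun _ => 0
  | k.+1 => fun i => if unlift ord_max i is Some j then (mX j)%:P else 'X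
  end.

Fixpoint meval (K : fieldType) (n : nat) : ('I_n -> K) -> mpoly n -> K :=
  match n return ('I_n -> K) -> mpoly n -> K with
  | 0 => fun _ c => ratr c
  | k.+1 => fun v p =>
      (map_poly (@meval K k (fun i => v (widen_ord (leqnSn k) i))) p).[v ord_max]
  end.

Definition Mould (n : nat) := {fraction mpoly n}.

Definition u (n : nat) (j : 'I_n) : Mould n := tofrac (mX j).

Definition msubst (m n : nat) (v : 'I_m -> Mould n) (F : Mould m) : Mould n :=
  let r := repr_of F in meval v (frac r).1 / meval v (frac r).2.

Definition Sig (m n : nat) (i k : 'I_m.+1) : Mould (m + n).+1 :=
  \sum_(j in blk n i k) u j.

Definition Mcomp0 (m n : nat) (i : 'I_m.+1) (F : Mould m.+1) (G : Mould n.+1)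
  : Mould (m + n).+1 :=
  Sig n i i * msubst (Sig n i) F * msubst (fun j => u (shft i j)) G.

Definition Pi (m n : nat) (i k : 'I_m.+1) : Mould (m + n).+1 :=
  \prod_(j in blk n i k) u j.

Definition Mcomp1 (m n : nat) (i : 'I_m.+1) (F : Mould m.+1) (G : Mould n.+1)
  : Mould (m + n).+1 :=
  (Pi n i i - 1) * msubst (Pi n i) F * msubst (fun j => u (shft i j)) G.

Definition Mact (n : nat) (s : {perm 'I_n}) (F : Mould n) : Mould n :=
  msubst (fun j => u (s j)) F.

Definition Munit0 : Mould 1 := (u ord0)^-1.
Definition Munit1 : Mould 1 := (u ord0 - 1)^-1.

Definition phi0 (n : nat) (F : FF n) : Mould n :=
  \prod_(S : nesub n) (\sum_(j in val S) u j) ^ (F S).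

Definition phi1 (n : nat) (F : FF n) : Mould n :=
  \prod_(S : nesub n) (\prod_(j in val S) u j - 1) ^ (F S).

From HB Require Import structures.
From mathcomp Require Import all_boot all_order all_algebra all_fingroup.
From mathcomp Require Import zify.
Set Implicit Arguments. Unset Strict Implicit. Unset Printing Implicit Defensive.
Import Order.TTheory GRing.Theory Num.Theory.
Local Open Scope ring_scope.
Local Open Scope quotient_scope.

(* Both maps are instances of phiL L : F |-> prod_S (L S)^(F S), which turns
   sums of formal fractions into products; L0 S = sum_(j in S) u_j and
   L1 S = prod_(j in S) u_j - 1.  A partial composition FFcomp i F G is the
   sum of the generator of the block {i..i+n}, of F with its symbols regrouped
   along the blocks of the composition, and of G with shifted indices;
   similarly the symmetric action relabels the indices.  On the mould side the
   corresponding operations are substitutions of rational functions.  Injectivity follows by evaluating at rational points where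
   exactly one label vanishes, so that no label can cancel in a relation
   phiL (F - G) = 1. *)

Definition rmorph_of (R S : nzRingType) (f : R -> S)
    (fB : zmod_morphism f) (fM : monoid_morphism f) : {rmorphism R -> S} :=
  HB.pack f (GRing.isZmodMorphism.Build _ _ f fB)
            (GRing.isMonoidMorphism.Build _ _ f fM).

Lemma fracE (R : idomainType) (x : {fraction R}) :
  x = tofrac (frac (repr_of x)).1 / tofrac (frac (repr_of x)).2.
Proof.
have {1}-> : x = \pi_({fraction R}) (repr_of x).
  have -> : repr_of x = generic_quotient.repr x by rewrite unlock.
  by rewrite generic_quotient.reprK.
set r := repr_of _; have hd : (frac r).2 != 0 := denom_ratioP r.
apply: (@mulIf _ (tofrac (frac r).2)); first by rewrite tofrac_eq0.
rewrite mulfVK ?tofrac_eq0 //; unlock tofrac; rewrite !piE.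
apply/eqmodP; rewrite /= FracField.equivfE /=.
rewrite !numden_Ratio ?oner_neq0 ?mulr1 ?mulf_neq0 ?oner_neq0 //.
by rewrite mulrC.
Qed.

Lemma fracP (R : idomainType) (x : {fraction R}) :
  exists a b, b != 0 /\ x = tofrac a / tofrac b.
Proof. by exists (frac (repr_of x)).1, (frac (repr_of x)).2; rewrite -fracE denom_ratioP. Qed.

Section FracLift.
Variables (R : idomainType) (K : fieldType) (f : {rmorphism R -> K}).
Hypothesis f_neq0 : forall b, b != 0 -> f b != 0.

Definition frac_lift (x : {fraction R}) : K :=
  f (frac (repr_of x)).1 / f (frac (repr_of x)).2.

Lemma frac_liftE a b : b != 0 -> frac_lift (tofrac a / tofrac b) = f a / f b.
Proof.
move=> b_neq0; rewrite /frac_lift; set x := tofrac a / tofrac b.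
have d_neq0 : (frac (repr_of x)).2 != 0 := denom_ratioP _.
have cross : a * (frac (repr_of x)).2 = (frac (repr_of x)).1 * b.
  apply/eqP; rewrite -tofrac_eq !tofracM -eqr_div ?tofrac_eq0 //.
  by rewrite -fracE.
apply/eqP; rewrite eqr_div ?f_neq0 // -!rmorphM.
by rewrite cross.
Qed.

Lemma frac_lift_is_zmod_morphism : zmod_morphism frac_lift.
Proof.
move=> x y; have [a [b [b_neq0 ->]]] := fracP x; have [c [d [d_neq0 ->]]] := fracP y.
have -> : tofrac a / tofrac b - tofrac c / tofrac d
          = tofrac (a * d - c * b) / tofrac (b * d) :> {fraction R}.
  by rewrite -mulNr addf_div ?tofrac_eq0 // tofracB !tofracM mulNr.
rewrite !frac_liftE ?mulf_neq0 // rmorphB !rmorphM.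
by rewrite -[in RHS]mulNr [in RHS]addf_div ?f_neq0 // mulNr.
Qed.

Lemma frac_lift_is_monoid_morphism : monoid_morphism frac_lift.
Proof.
split=> [|x y].
  by rewrite -[1 in LHS]divr1 -tofrac1 frac_liftE ?oner_neq0 // rmorph1 divr1.
have [a [b [b_neq0 ->]]] := fracP x; have [c [d [d_neq0 ->]]] := fracP y.
rewrite mulrACA -invfM -!tofracM !frac_liftE ?mulf_neq0 //.
by rewrite !rmorphM mulrACA invfM.
Qed.

Definition frac_liftRM : {rmorphism {fraction R} -> K} :=
  rmorph_of frac_lift_is_zmod_morphism frac_lift_is_monoid_morphism.

Lemma frac_lift_tofrac a : frac_lift (tofrac a) = f a.
Proof. by rewrite -[tofrac a]divr1 -tofrac1 frac_liftE ?oner_neq0 // rmorph1 divr1. Qed.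

End FracLift.

Lemma widen_ord_lift k (j : 'I_k) : lift ord_max j = widen_ord (leqnSn k) j.
Proof. by apply: val_inj; rewrite /= /bump leqNgt ltn_ord. Qed.

Lemma mX_widen k (j : 'I_k) :
  mX (widen_ord (leqnSn k) j) = (mX j)%:P :> mpoly k.+1.
Proof. by rewrite -widen_ord_lift /= liftK. Qed.

Lemma mX_max k : mX (@ord_max k) = 'X :> mpoly k.+1.
Proof. by rewrite /= unlift_none. Qed.

Section Eval.
Variables (R : comNzRingType) (c0 : {rmorphism rat -> R}).

Fixpoint pev (n : nat) : ('I_n -> R) -> mpoly n -> R :=
  match n return ('I_n -> R) -> mpoly n -> R with
  | 0 => fun _ x => c0 x
  | k.+1 => fun v p =>
      (map_poly (@pev k (fun i => v (widen_ord (leqnSn k) i))) p).[v ord_max]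
  end.

Lemma pev_morph n (v : 'I_n -> R) :
  zmod_morphism (pev v) * monoid_morphism (pev v).
Proof.
elim: n v => [|k IH] v.
  by split; [exact: rmorphB | split; [exact: rmorph1 | exact: rmorphM]].
have [pevB pevM] := IH (fun i => v (widen_ord (leqnSn k) i)).
pose f := rmorph_of pevB pevM.
have pevE p : pev v p = (map_poly f p).[v ord_max] by [].
split; [move=> x y | split; [|move=> x y]]; rewrite !pevE.
- by rewrite rmorphB hornerD hornerN.
- by rewrite rmorph1 hornerC.
- by rewrite rmorphM hornerM.
Qed.

Definition pevRM n (v : 'I_n -> R) : {rmorphism mpoly n -> R} :=
  rmorph_of (pev_morph v).1 (pev_morph v).2.

Lemma pev_mX n (v : 'I_n -> R) j : pev v (mX j) = v j.
Proof.
elim: n v j => [|k IH] v j; first by case: j.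
have pevE p : pev v p =
    (map_poly (pevRM (fun i => v (widen_ord (leqnSn k) i))) p).[v ord_max] by [].
case: (unliftP ord_max j) => [j'|] ->.
  by rewrite widen_ord_lift mX_widen pevE map_polyC hornerC /= IH.
by rewrite mX_max pevE map_polyX hornerX.
Qed.

End Eval.

Lemma meval_pevE (K : fieldType) (g : {rmorphism rat -> K}) n (v : 'I_n -> K) :
  meval v =1 pev g v.
Proof.
elim: n v => [|k IH] v p /=; first by rewrite fmorph_eq_rat.
by rewrite (eq_map_poly (IH _)).
Qed.

Lemma meval_morph (K : fieldType) (g : {rmorphism rat -> K}) n (v : 'I_n -> K) :
  zmod_morphism (meval v) * monoid_morphism (meval v).
Proof.
split; [move=> x y | split; [|move=> x y]]; rewrite !(meval_pevE g).
- exact: (rmorphB (pevRM g v)).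
- exact: (rmorph1 (pevRM g v)).
- exact: (rmorphM (pevRM g v)).
Qed.

Definition mevalRM (K : fieldType) (g : {rmorphism rat -> K}) n (v : 'I_n -> K)
  : {rmorphism mpoly n -> K} :=
  rmorph_of (meval_morph g v).1 (meval_morph g v).2.

Lemma meval_mX (K : fieldType) (g : {rmorphism rat -> K}) n (v : 'I_n -> K) j :
  meval v (mX j) = v j.
Proof. by rewrite (meval_pevE g) pev_mX. Qed.

Lemma meval_uniq (K : fieldType) n (v : 'I_n -> K) (f : {rmorphism mpoly n -> K}) :
  (forall j, f (mX j) = v j) -> f =1 meval v.
Proof.
elim: n v f => [|k IH] v f f_mX p; first by rewrite /= -(fmorph_eq_rat f).
pose fC : {rmorphism mpoly k -> K} := f \o polyC.
have fC_mX j : fC (mX j) = v (widen_ord (leqnSn k) j) by rewrite /fC /= -mX_widen.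
rewrite /= -(eq_map_poly (IH _ fC fC_mX)) -(f_mX ord_max) mX_max.
elim/poly_ind: p => [|p c IHp]; first by rewrite !rmorph0 horner0.
by rewrite !rmorphD !rmorphM /= map_polyX map_polyC hornerD hornerM IHp hornerX hornerC.
Qed.

Lemma meval_ext (K : fieldType) (g : {rmorphism rat -> K}) n (v v' : 'I_n -> K) :
  v =1 v' -> meval v =1 meval v'.
Proof.
move=> vv' p; apply: (meval_uniq (f := mevalRM g v)) => j.
by rewrite /= (meval_mX g) vv'.
Qed.

Fixpoint cst (N : nat) : rat -> mpoly N :=
  match N return rat -> mpoly N with
  | 0 => fun x => x
  | k.+1 => fun x => (cst k x)%:P
  end.

Lemma cst_morph N : zmod_morphism (cst N) * monoid_morphism (cst N).
Proof.
elim: N => [|k [cstB [cst1 cstM]]]; first by split => //; split.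
split; [move=> x y | split; [|move=> x y]] => /=.
- by rewrite cstB polyCB.
- by rewrite cst1.
- by rewrite cstM polyCM.
Qed.

Definition cstRM N : {rmorphism rat -> mpoly N} :=
  rmorph_of (cst_morph N).1 (cst_morph N).2.

Definition ratM N : {rmorphism rat -> Mould N} := @tofrac (mpoly N) \o cstRM N.

Lemma meval_tofrac N n (q : 'I_n -> mpoly N) p :
  meval (fun k => tofrac (q k)) p = tofrac (pev (cstRM N) q p).
Proof.
symmetry; apply: (meval_uniq (f := @tofrac (mpoly N) \o pevRM (cstRM N) q)) => j.
by rewrite /= pev_mX.
Qed.

Lemma meval_pev N n (q : 'I_n -> mpoly N) (w : 'I_N -> Mould n) p :
  meval w (pev (cstRM N) q p) = meval (fun k => meval w (q k)) p.
Proof.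
apply: (meval_uniq (f := mevalRM (ratM n) w \o pevRM (cstRM N) q)) => j.
by rewrite /= pev_mX.
Qed.

Lemma meval_u n p : meval (@u n) p = tofrac p.
Proof. by symmetry; apply: (meval_uniq (f := @tofrac (mpoly n))). Qed.

(* A substitution u_k |-> v k is faithful when it kills no nonzero
   polynomial; exactly these substitutions act on rational functions. *)
Definition faithful m n (v : 'I_m -> Mould n) := forall p, meval v p = 0 -> p = 0.

Lemma faithful_retract m n (v : 'I_m -> Mould n) (q : 'I_m -> mpoly n)
    (w : 'I_n -> Mould m) :
  (forall k, v k = tofrac (q k)) -> (forall k, meval w (q k) = u k) -> faithful v.
Proof.
move=> vq wq p; rewrite (meval_ext (ratM n) vq) meval_tofrac => /eqP.
rewrite tofrac_eq0 => /eqP qp0; apply/eqP; rewrite -tofrac_eq0 -meval_u.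
rewrite -(meval_ext (ratM m) wq) -meval_pev qp0.
by apply/eqP; exact: (rmorph0 (mevalRM (ratM m) w)).
Qed.

Section Msubst.
Variables (m n : nat) (v : 'I_m -> Mould n).
Hypothesis v_faithful : faithful v.

Lemma meval_neq0 p : p != 0 -> mevalRM (ratM n) v p != 0.
Proof. by apply: contra => /eqP /v_faithful ->. Qed.

Definition msubstRM : {rmorphism Mould m -> Mould n} := frac_liftRM meval_neq0.

Lemma msubstRME x : msubstRM x = msubst v x.
Proof. by []. Qed.

Lemma msubst_u j : msubst v (u j) = v j.
Proof. by rewrite -msubstRME /= (frac_lift_tofrac meval_neq0) [LHS]/= (meval_mX (ratM n)). Qed.

Lemma msubst_sum (S : {set 'I_m}) : msubst v (\sum_(j in S) u j) = \sum_(j in S) v j.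
Proof. by rewrite -msubstRME rmorph_sum; apply: eq_bigr => j _; rewrite msubstRME msubst_u. Qed.

Lemma msubst_prod (S : {set 'I_m}) : msubst v (\prod_(j in S) u j) = \prod_(j in S) v j.
Proof. by rewrite -msubstRME rmorph_prod; apply: eq_bigr => j _; rewrite msubstRME msubst_u. Qed.

End Msubst.

Definition phiL (K : fieldType) n (L : {set 'I_n} -> K) (F : FF n) : K :=
  \prod_(S : nesub n) L (val S) ^ F S.

Section PhiL.
Variables (K : fieldType) (n : nat) (L : {set 'I_n} -> K).
Hypothesis L_neq0 : forall S : nesub n, L (val S) != 0.

Lemma phiL_add A B : phiL L (A + B) = phiL L A * phiL L B.
Proof. by rewrite /phiL -big_split; apply: eq_bigr => S _; rewrite ffunE expfzDr. Qed.

Lemma phiL_opp A : phiL L (- A) = (phiL L A)^-1.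
Proof. by rewrite /phiL -prodfV; apply: eq_bigr => S _; rewrite ffunE invr_expz. Qed.

Lemma phiL_neq0 A : phiL L A != 0.
Proof. by rewrite /phiL prodf_seq_neq0; apply/allP => S _; rewrite expfz_neq0. Qed.

Lemma phiL_gen (S : {set 'I_n}) : S != set0 -> phiL L (FFgen S) = L S.
Proof.
move=> S_neq0; rewrite /phiL (bigD1 (exist _ S S_neq0)) //= big1 ?mulr1.
  by rewrite ffunE eqxx expr1z.
move=> T T_neqS; rewrite ffunE.
suff -> : (val T == S) = false by rewrite expr0z.
by apply/negbTE; apply: contra T_neqS => /eqP TS; apply/eqP/val_inj.
Qed.

End PhiL.

Lemma phiL_map (K : fieldType) p q (L : {set 'I_q} -> K)
    (f : {set 'I_p} -> {set 'I_q}) F :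
  (forall S : nesub q, L (val S) != 0) ->
  (forall S : nesub p, f (val S) != set0) ->
  phiL L (FFmap f F) = \prod_(S : nesub p) L (f (val S)) ^ F S.
Proof.
move=> L_neq0 f_neq0; rewrite /phiL.
under eq_bigr => T _ do rewrite ffunE
  (big_morph (fun z : int => L (val T) ^ z) (fun a b => expfzDr a b (L_neq0 T))
             (expr0z _)).
rewrite (exchange_big_dep xpredT) //=; apply: eq_bigr => S _.
rewrite (bigD1 (exist _ (f (val S)) (f_neq0 S))) //= big1 ?mulr1 // => T.
by case/andP=> /eqP fST; apply: contraNeq => _; apply/eqP/val_inj.
Qed.

Lemma phiL_FFmap (K K' : fieldType) p q (L : {set 'I_p} -> K)
    (L' : {set 'I_q} -> K') (rho : {rmorphism K -> K'})
    (f : {set 'I_p} -> {set 'I_q}) F :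
  (forall S : nesub q, L' (val S) != 0) ->
  (forall S : nesub p, f (val S) != set0) ->
  (forall S : nesub p, rho (L (val S)) = L' (f (val S))) ->
  phiL L' (FFmap f F) = rho (phiL L F).
Proof.
move=> L'_neq0 f_neq0 rhoL; rewrite phiL_map // rmorph_prod.
by apply: eq_bigr => S _; rewrite fmorphXz rhoL.
Qed.

Definition l0 n (S : {set 'I_n}) : mpoly n := \sum_(j in S) mX j.
Definition l1 n (S : {set 'I_n}) : mpoly n := \prod_(j in S) mX j - 1.
Definition L0 n (S : {set 'I_n}) : Mould n := \sum_(j in S) u j.
Definition L1 n (S : {set 'I_n}) : Mould n := \prod_(j in S) u j - 1.

Lemma L0E n (S : {set 'I_n}) : L0 S = tofrac (l0 S).
Proof. by rewrite rmorph_sum. Qed.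

Lemma L1E n (S : {set 'I_n}) : L1 S = tofrac (l1 S).
Proof. by rewrite rmorphB rmorph1 rmorph_prod. Qed.

Lemma phi0E n (F : FF n) : phi0 F = phiL (@L0 n) F. Proof. by []. Qed.
Lemma phi1E n (F : FF n) : phi1 F = phiL (@L1 n) F. Proof. by []. Qed.

Definition idQ : {rmorphism rat -> rat} := idfun.

(* l0 S takes the value #|S| at (1,...,1), and l1 S the value -1 at 0. *)
Lemma l0_neq0 n (S : {set 'I_n}) : S != set0 -> l0 S != 0.
Proof.
move=> S_neq0; apply: contra_neq (S_neq0) => /(congr1 (mevalRM idQ (fun=> 1))).
rewrite rmorph_sum rmorph0; under eq_bigr do rewrite /= (meval_mX idQ).
by rewrite sumr_const => /eqP; rewrite pnatr_eq0 cards_eq0 => /eqP.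
Qed.

Lemma l1_neq0 n (S : {set 'I_n}) : S != set0 -> l1 S != 0.
Proof.
move=> S_neq0; apply/eqP => /(congr1 (mevalRM idQ (fun=> 0))).
rewrite rmorphB rmorph1 rmorph_prod rmorph0.
under eq_bigr do rewrite /= (meval_mX idQ).
by rewrite prodr_const expr0n cards_eq0 (negbTE S_neq0) sub0r => /eqP; rewrite oppr_eq0 oner_eq0.
Qed.

Lemma L0_neq0 n (S : nesub n) : L0 (val S) != 0.
Proof. by rewrite L0E tofrac_eq0 l0_neq0 ?(valP S). Qed.

Lemma L1_neq0 n (S : nesub n) : L1 (val S) != 0.
Proof. by rewrite L1E tofrac_eq0 l1_neq0 ?(valP S). Qed.

Section Relabel.
Variables (p q : nat) (g : 'I_p -> 'I_q).
Hypothesis g_inj : injective g.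

Definition retract (c : Mould p) (t : 'I_q) : Mould p :=
  if [pick k | g k == t] is Some k then u k else c.

Lemma retract_g c k : retract c (g k) = u k.
Proof. by rewrite /retract; case: pickP => [k' /eqP/g_inj -> // | /(_ k)]; rewrite eqxx. Qed.

Lemma retract_out c t : (forall k, g k != t) -> retract c t = c.
Proof. by move=> gt; rewrite /retract; case: pickP => // k; rewrite (negbTE (gt k)). Qed.

Lemma relabel_faithful : faithful (fun k => u (g k)).
Proof.
apply: (faithful_retract (q := fun k => mX (g k)) (w := retract 0)) => // k.
by rewrite (meval_mX (ratM p)) retract_g.
Qed.

Lemma phi0_relabel (F : FF p) :
  phi0 (FFmap (fun S => g @: S) F) = msubst (fun k => u (g k)) (phi0 F).
Proof.
rewrite !phi0E -(msubstRME relabel_faithful).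
apply: phiL_FFmap => [S|S|S]; first exact: L0_neq0.
  by rewrite imset_eq0 (valP S).
by rewrite msubstRME (msubst_sum relabel_faithful) /L0 (big_imset _ (in2W g_inj)).
Qed.

Lemma phi1_relabel (F : FF p) :
  phi1 (FFmap (fun S => g @: S) F) = msubst (fun k => u (g k)) (phi1 F).
Proof.
rewrite !phi1E -(msubstRME relabel_faithful).
apply: phiL_FFmap => [S|S|S]; first exact: L1_neq0.
  by rewrite imset_eq0 (valP S).
by rewrite rmorphB rmorph1 msubstRME (msubst_prod relabel_faithful) /L1
  (big_imset _ (in2W g_inj)).
Qed.

End Relabel.

Section Blocks.
Variables (p q : nat) (B : 'I_p -> {set 'I_q}) (r : 'I_p -> 'I_q).
Hypothesis r_in : forall k, r k \in B k.
Hypothesis B_disj : forall k k', k != k' -> [disjoint B k & B k'].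

Lemma block_eq k k' j : j \in B k -> j \in B k' -> k = k'.
Proof.
move=> jk jk'; apply/eqP; apply: contraLR jk' => /B_disj kk'.
by rewrite (disjointFr kk' jk).
Qed.

Lemma r_inj : injective r.
Proof. by move=> k k' rkk'; apply: (block_eq (j := r k)); rewrite // rkk'. Qed.

Lemma big_retract (c : Mould p) (op : Monoid.com_law c) k :
  \big[op/c]_(j in B k) retract r c j = u k.
Proof.
rewrite (bigD1 (r k) (r_in k)) /= retract_g ?big1 ?Monoid.mulm1 //; last exact: r_inj.
move=> j /andP [jk jr]; apply: retract_out => k'.
apply: contraNneq jr => rj.
by rewrite -rj (block_eq jk (_ : j \in B k')) // -rj.
Qed.

Lemma block_sum_faithful : faithful (fun k => L0 (B k)).
Proof.
apply: (faithful_retract (q := fun k => l0 (B k)) (w := retract r 0)) => k.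
  exact: L0E.
rewrite -[meval _ _]/(mevalRM (ratM p) _ _) rmorph_sum.
under eq_bigr do rewrite /= (meval_mX (ratM p)).
exact: big_retract.
Qed.

Lemma block_prod_faithful : faithful (fun k => \prod_(j in B k) u j).
Proof.
apply: (faithful_retract (q := fun k => \prod_(j in B k) mX j) (w := retract r 1)).
  by move=> k; rewrite rmorph_prod.
move=> k; rewrite -[meval _ _]/(mevalRM (ratM p) _ _) rmorph_prod.
under eq_bigr do rewrite /= (meval_mX (ratM p)).
exact: big_retract.
Qed.

Lemma big_blocks (R : Type) (idx : R) (op : Monoid.com_law idx) (E : 'I_q -> R)
    (S : {set 'I_p}) :
  \big[op/idx]_(j in \bigcup_(k in S) B k) E j
  = \big[op/idx]_(k in S) \big[op/idx]_(j in B k) E j.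
Proof.
pose BS k := if k \in S then B k else set0.
have -> : \bigcup_(k in S) B k = \bigcup_k BS k by rewrite big_mkcond.
rewrite partition_disjoint_bigcup => [|k k' kk'].
  rewrite [RHS]big_mkcond; apply: eq_bigr => k _; rewrite /BS.
  by case: (k \in S); rewrite ?big_set0.
rewrite /BS; case: (k \in S); case: (k' \in S); first exact: B_disj.
all: by apply/pred0P => j /=; rewrite ?inE ?andbF.
Qed.

Lemma bigcup_blocks_neq0 (S : nesub p) : \bigcup_(k in val S) B k != set0.
Proof.
have [k kS] := set0Pn _ (valP S).
by apply/set0Pn; exists (r k); apply/bigcupP; exists k.
Qed.

Lemma phi0_blocks (F : FF p) :
  phi0 (FFmap (fun S => \bigcup_(k in S) B k) F)
  = msubst (fun k => L0 (B k)) (phi0 F).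
Proof.
rewrite !phi0E -(msubstRME block_sum_faithful).
apply: phiL_FFmap => [S|S|S]; [exact: L0_neq0 | exact: bigcup_blocks_neq0 |].
by rewrite msubstRME (msubst_sum block_sum_faithful) /L0 big_blocks.
Qed.

Lemma phi1_blocks (F : FF p) :
  phi1 (FFmap (fun S => \bigcup_(k in S) B k) F)
  = msubst (fun k => \prod_(j in B k) u j) (phi1 F).
Proof.
rewrite !phi1E -(msubstRME block_prod_faithful).
apply: phiL_FFmap => [S|S|S]; [exact: L1_neq0 | exact: bigcup_blocks_neq0 |].
by rewrite rmorphB rmorph1 msubstRME (msubst_prod block_prod_faithful) /L1 big_blocks.
Qed.

End Blocks.

Section CompositionBlocks.
Variables (m n : nat) (i : 'I_m.+1).
Local Open Scope nat_scope.

Lemma mem_blk (k : 'I_m.+1) (j : 'I_(m + n).+1) :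
  (j \in blk n i k) = [|| (k < i) && (j == k :> nat),
                          (k == i :> nat) && (i <= j <= i + n)
                        | (i < k) && (j == k + n :> nat)].
Proof.
rewrite inE; case: (ltngtP k i) => ki.
- by rewrite /= orbF; case: (j == k :> nat); rewrite ?andbF //; lia.
- have -> : (k == i) = false by apply/negbTE; rewrite -val_eqE /=; lia.
  by rewrite /=; case: (j == k + n :> nat) => //; lia.
- have -> : k = i by apply: val_inj.
  by rewrite eqxx /= orbF.
Qed.

Definition blk_rep (k : 'I_m.+1) : 'I_(m + n).+1 :=
  inord (if k <= i then nat_of_ord k else k + n).

Lemma blk_rep_in k : blk_rep k \in blk n i k.
Proof.
have rep_val : blk_rep k = (if k <= i then nat_of_ord k else k + n) :> nat.
  by rewrite inordK //; case: ifP => _; have := ltn_ord k; lia.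
by rewrite mem_blk rep_val; case: (ltngtP k i) => ki; rewrite ?eqxx //=; lia.
Qed.

Lemma blk_disj k k' : k != k' -> [disjoint blk n i k & blk n i k'].
Proof.
move=> kk'; apply/pred0P => j /=; apply/negbTE/negP => /andP [].
rewrite !mem_blk => jk jk'; apply/negP: kk'; rewrite negbK; apply/eqP/ord_inj.
by case/or3P: jk => /andP [a1 a2]; case/or3P: jk' => /andP [b1 b2]; lia.
Qed.

Lemma shft_inj : injective (@shft m n i).
Proof.
have shftE (j : 'I_n.+1) : shft i j = i + j :> nat.
  by rewrite /shft inordK //; have := ltn_ord i; have := ltn_ord j; lia.
by move=> j j' jj'; apply: ord_inj; have := shftE j; have := shftE j'; rewrite jj'; lia.
Qed.

End CompositionBlocks.

Lemma phi0_comp m n (i : 'I_m.+1) (F : FF m.+1) (G : FF n.+1) :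
  phi0 (FFcomp i F G) = Mcomp0 i (phi0 F) (phi0 G).
Proof.
rewrite /FFcomp !phi0E !phiL_add; try exact: L0_neq0.
rewrite phiL_gen -?phi0E; last by apply/set0Pn; exists (blk_rep n i i); apply: blk_rep_in.
rewrite (phi0_blocks (@blk_rep_in m n i) (@blk_disj m n i)).
by rewrite (phi0_relabel (@shft_inj m n i)).
Qed.

Lemma phi1_comp m n (i : 'I_m.+1) (F : FF m.+1) (G : FF n.+1) :
  phi1 (FFcomp i F G) = Mcomp1 i (phi1 F) (phi1 G).
Proof.
rewrite /FFcomp !phi1E !phiL_add; try exact: L1_neq0.
rewrite phiL_gen -?phi1E; last by apply/set0Pn; exists (blk_rep n i i); apply: blk_rep_in.
rewrite (phi1_blocks (@blk_rep_in m n i) (@blk_disj m n i)).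
by rewrite (phi1_relabel (@shft_inj m n i)).
Qed.

Lemma phi0_act n (s : {perm 'I_n}) (F : FF n) : phi0 (FFact s F) = Mact s (phi0 F).
Proof. exact: (phi0_relabel (@perm_inj _ s)). Qed.

Lemma phi1_act n (s : {perm 'I_n}) (F : FF n) : phi1 (FFact s F) = Mact s (phi1 F).
Proof. exact: (phi1_relabel (@perm_inj _ s)). Qed.

Lemma phi0_unit : phi0 FFunit = Munit0.
Proof.
rewrite /FFunit phi0E phiL_opp ?phiL_gen ?L0_neq0 //.
  by rewrite /L0 big_set1.
by apply/set0Pn; exists ord0; rewrite inE.
Qed.

Lemma phi1_unit : phi1 FFunit = Munit1.
Proof.
rewrite /FFunit phi1E phiL_opp ?phiL_gen ?L1_neq0 //.
  by rewrite /L1 big_set1.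
by apply/set0Pn; exists ord0; rewrite inE.
Qed.

Lemma binary_digits_uniq n (f g : nat -> bool) :
  (\sum_(j < n) f j * 2 ^ j = \sum_(j < n) g j * 2 ^ j)%N ->
  forall j, (j < n)%N -> f j = g j.
Proof.
elim: n f g => [|n IH] f g fg j jn //.
have shift (h : nat -> bool) : (\sum_(k < n) h (bump 0 k) * 2 ^ bump 0 k =
                              2 * \sum_(k < n) h k.+1 * 2 ^ k)%N.
  by rewrite big_distrr; apply: eq_bigr => k _; rewrite /bump add1n expnS mulnCA.
move: fg; rewrite !big_ord_recl /= !shift => fg.
have fg0 : f 0%N = g 0%N by move: fg; case: (f 0%N); case: (g 0%N) => //=; lia.
case: j jn => [|j] jn //; apply: (IH (fun k => f k.+1) (fun k => g k.+1)) => //.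
by move: fg; rewrite fg0; lia.
Qed.

Lemma binary_set_uniq n (A B : {set 'I_n}) :
  (\sum_(j in A) 2 ^ j = \sum_(j in B) 2 ^ j)%N -> A = B.
Proof.
case: n A B => [|n] A B AB; first by apply/setP => [[]].
have digits (X : {set 'I_n.+1}) :
    (\sum_(j in X) 2 ^ j = \sum_(j < n.+1) (inord j \in X) * 2 ^ j)%N.
  rewrite big_mkcond; apply: eq_bigr => j _; rewrite inord_val.
  by case: (j \in X); rewrite ?mul1n ?mul0n.
move: AB; rewrite !digits => AB; apply/setP => j.
have := @binary_digits_uniq _ (fun k => inord k \in A) (fun k => inord k \in B) AB j.
by rewrite /= inord_val; apply.
Qed.

(* Given a nonempty S0, a point of R^n where the linear form sum_(j in T) u_j
   vanishes for T = S0 and for no other nonempty T: u_j = 2^j outside a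
   chosen s0 in S0, and u_s0 chosen to cancel the rest of S0. *)
Lemma separating_point (R : numDomainType) n (S0 : {set 'I_n}) : S0 != set0 ->
  exists a : 'I_n -> R, forall T : {set 'I_n}, T != set0 ->
    (\sum_(j in T) a j == 0) = (T == S0).
Proof.
case/set0Pn => s0 s0S0.
pose b (T : {set 'I_n}) := (\sum_(j in T :\ s0) 2 ^ j)%N.
pose a j : R := if j == s0 then - (b S0)%:R else (2 ^ j)%:R.
exists a => T T_neq0.
have sumE : \sum_(j in T) a j = (if s0 \in T then - (b S0)%:R else 0) + (b T)%:R.
  rewrite (bigID (pred1 s0)) /=; congr (_ + _).
    case: ifP => s0T; last by rewrite big_pred0 // => j; apply: contraFF s0T => /andP [jT /eqP <-].
    by rewrite (big_pred1 s0) /a ?eqxx // => j; rewrite /= andbC; case: eqP => // ->.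
  rewrite /b natr_sum; apply: eq_big => [j | j /andP [_ /negbTE js0]].
    by rewrite !inE andbC.
  by rewrite /a js0.
rewrite sumE; case: ifP => s0T.
  rewrite addrC subr_eq0 eqr_nat; apply/eqP/eqP => [bTS0 | -> //].
  by rewrite -(setD1K s0T) -(setD1K s0S0) (binary_set_uniq bTS0).
have -> : (T == S0) = false by apply: contraFF s0T => /eqP ->.
case/set0Pn: T_neq0 => t tT; rewrite add0r pnatr_eq0; apply/negbTE; rewrite -lt0n /b (bigD1 t) /=.
  by rewrite addn_gt0 expn_gt0.
by rewrite !inE tT andbT; apply: contraFneq s0T => <-.
Qed.

Definition pos_part (z : int) : nat := if z is Posz k then k else 0%N.
Definition neg_part (z : int) : nat := if z is Negz k then k.+1 else 0%N.

Lemma expz_parts (F : fieldType) (x : F) (z : int) :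
  x ^ z = x ^+ pos_part z / x ^+ neg_part z.
Proof. by case: z => k /=; rewrite ?expr0 ?divr1 ?mul1r. Qed.

(* If the polynomial labels can be separated by rational points (one for
   each S0, where only l S0 vanishes), then phiL is injective: the factors
   l S0 cannot cancel from phiL (F - G) = 1. *)
Lemma phiL_poly_inj n (l : {set 'I_n} -> mpoly n) :
  (forall S : nesub n, l (val S) != 0) ->
  (forall S0 : nesub n, exists c : 'I_n -> rat,
      forall T : nesub n, (mevalRM idQ c (l (val T)) == 0) = (T == S0)) ->
  injective (phiL (fun S => tofrac (l S))).
Proof.
move=> l_neq0 separate F G FG.
have L_neq0 (S : nesub n) : tofrac (l (val S)) != 0 :> Mould n by rewrite tofrac_eq0.
set H := F - G.
have H1 : phiL (fun S => tofrac (l S)) H = 1.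
  by rewrite phiL_add // phiL_opp FG mulfV // phiL_neq0.
suff /eqP : H = 0 by rewrite subr_eq0 => /eqP.
apply/ffunP => S0; rewrite [RHS]ffunE.
pose P := \prod_(T : nesub n) l (val T) ^+ pos_part (H T).
pose Q := \prod_(T : nesub n) l (val T) ^+ neg_part (H T).
have PQ : P = Q.
  have Q_neq0 : tofrac Q != 0 :> Mould n.
    by rewrite tofrac_eq0 prodf_seq_neq0; apply/allP => T _; rewrite expf_neq0.
  have phiL_PQ : phiL (fun S => tofrac (l S)) H = tofrac P / tofrac Q.
    rewrite /phiL; under eq_bigr do rewrite expz_parts.
    rewrite prodf_div !rmorph_prod; congr (_ / _).
      by apply: eq_bigr => T _; rewrite rmorphXn.
    by apply: eq_bigr => T _; rewrite rmorphXn.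
  by apply/eqP; rewrite -tofrac_eq -[tofrac P](mulfVK Q_neq0) -phiL_PQ H1 mul1r.
have [c c_sep] := separate S0.
have vanish (e : nesub n -> nat) :
    (mevalRM idQ c (\prod_(T : nesub n) l (val T) ^+ e T) == 0) = (0 < e S0)%N.
  rewrite rmorph_prod prodf_seq_eq0; apply/hasP/idP => [[T _] | e_pos].
    by rewrite rmorphXn expf_eq0 c_sep => /and3P [_ ? /eqP <-].
  by exists S0; rewrite ?mem_index_enum // rmorphXn expf_eq0 c_sep eqxx andbT.
have := vanish (fun T => pos_part (H T)); have := vanish (fun T => neg_part (H T)).
by rewrite -/P -/Q PQ => ->; case: (H S0) => [[|k]|k].
Qed.

(* phi0 and phi1 are injective: their labels are separated by the points of
   separating_point, taken directly for phi0 and as powers of 2 for phi1. *)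
Lemma phi0_inj n : injective (@phi0 n).
Proof.
have phi0_l : @phi0 n =1 phiL (fun S => tofrac (l0 S)).
  by move=> F; apply: eq_bigr => S _; rewrite -L0E.
move=> F G; rewrite !phi0_l; apply: phiL_poly_inj => [S | S0].
  exact/l0_neq0/(valP S).
have [a a_sep] := separating_point rat (valP S0).
exists a => T; rewrite rmorph_sum; under eq_bigr do rewrite /= (meval_mX idQ).
by rewrite a_sep ?(valP T) // val_eqE.
Qed.

Lemma pow2_eq1 (z : int) : ((2%:R : rat) ^ z == 1) = (z == 0).
Proof.
have two_gt1 : (1 : rat) < 2%:R by [].
case: z => [[|k]|k] //=; first by rewrite gt_eqF // exprn_egt1.
by rewrite invr_eq1 gt_eqF // exprn_egt1.
Qed.

Lemma phi1_inj n : injective (@phi1 n).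
Proof.
have phi1_l : @phi1 n =1 phiL (fun S => tofrac (l1 S)).
  by move=> F; apply: eq_bigr => S _; rewrite -L1E.
move=> F G; rewrite !phi1_l; apply: phiL_poly_inj => [S | S0].
  exact/l1_neq0/(valP S).
have [a a_sep] := separating_point int (valP S0).
exists (fun j => (2%:R : rat) ^ a j) => T.
rewrite rmorphB rmorph1 rmorph_prod; under eq_bigr do rewrite /= (meval_mX idQ).
have two_neq0 : (2%:R : rat) != 0 by [].
rewrite -(big_morph (fun z : int => (2%:R : rat) ^ z) (fun x y => expfzDr x y two_neq0) (expr0z _)).
by rewrite subr_eq0 pow2_eq1 a_sep ?(valP T) // val_eqE.
Qed.

Theorem mainTheorem2 :
  (* phi^0 : FF^Sigma -> Mould_0^Sigma *)
  [/\ (forall (m n : nat) (i : 'I_m.+1) (F : FF m.+1) (G : FF n.+1),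
         phi0 (FFcomp i F G) = Mcomp0 i (phi0 F) (phi0 G)),
      (forall (n : nat) (s : {perm 'I_n}) (F : FF n),
         phi0 (FFact s F) = Mact s (phi0 F)),
      phi0 FFunit = Munit0
    & (forall (n : nat), injective (@phi0 n))]
  /\
  (* phi^1 : FF^Sigma -> Mould_1^Sigma *)
  [/\ (forall (m n : nat) (i : 'I_m.+1) (F : FF m.+1) (G : FF n.+1),
         phi1 (FFcomp i F G) = Mcomp1 i (phi1 F) (phi1 G)),
      (forall (n : nat) (s : {perm 'I_n}) (F : FF n),
         phi1 (FFact s F) = Mact s (phi1 F)),
      phi1 FFunit = Munit1
    & (forall (n : nat), injective (@phi1 n))].
Proof.
split; split.
- exact: phi0_comp.
- exact: phi0_act.
- exact: phi0_unit.
- exact: phi0_inj.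
- exact: phi1_comp.
- exact: phi1_act.
- exact: phi1_unit.
- exact: phi1_inj.
Qed.
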